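(* Let $m\ge1$ and let $u$ be an $m$-labeled binary tree with $|u|=p$ edges. The generating function $\mathbf C^{\mathcal B}_{m,p}(z)=\sum_{n\ge0} c_n z^n$, where $c_n$ is the number of $m$-labeled binary trees with $n$ edges that contain $u$ as a subtree, is $$\mathbf C^{\mathcal B}_{m,p}(z)=\frac{1}{2mz^2}\left(\sqrt{1-4mz+4mz^{p+2}}-\sqrt{1-4mz}\right).$$
   Context: An $m$-labeled binary tree is a non-empty finite rooted tree whose nodes carry labels from $\{1,\dots,m\}$ and in which every node has an optional left child and an optional right child (a node with only a left child is distinct from one with only a right child). Its size is its number of edges. A tree $t$ contains $u$ as a subtree if for some node $v$ of $t$, the subtree of $t$ rooted at $v$ (consisting of $v$ and all its descendants) equals $u$. *)

From Stdlib Require Import Reals List.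
From Coquelicot Require Import Coquelicot.

Inductive btree : Type :=
  | Node : nat -> option btree -> option btree -> btree.

Fixpoint nnodes (t : btree) : nat :=
  match t with
  | Node _ l r =>
      1 + match l with Some l' => nnodes l' | None => 0 end
        + match r with Some r' => nnodes r' | None => 0 end
  end.

Definition edges (t : btree) : nat := nnodes t - 1.

Fixpoint labeled (m : nat) (t : btree) : Prop :=
  match t with
  | Node a l r =>
      (1 <= a <= m)%nat
      /\ match l with Some l' => labeled m l' | None => True end
      /\ match r with Some r' => labeled m r' | None => True end
  end.

Inductive contains : btree -> btree -> Prop :=
  | contains_here u : contains u u
  | contains_left a l r u : contains l u -> contains (Node a (Some l) r) u
  | contains_right a l r u : contains r u -> contains (Node a l (Some r)) u.

Definition is_count (P : btree -> Prop) (k : nat) : Prop :=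
  exists s : list btree, NoDup s /\ (forall t, In t s <-> P t) /\ length s = k.

From Stdlib Require Import Reals List.
From Coquelicot Require Import Coquelicot.
From Stdlib Require Import Lia Lra Arith Permutation Classical.
Import ListNotations.

(* Count trees by nodes, the empty tree being the one with 0 nodes: B_k trees in all,
   A_k trees avoiding u. Splitting at the root gives B_(k+1) = m * sum_i B_i B_(k-i), and
   the same for A except that u itself, the one tree whose children avoid u but which
   does not, must be removed: A_(k+1) = m * sum_i A_i A_(k-i) - [k = |u|]. Hence
   A(z) = 1 + m z A(z)^2 - z^(|u|+1), and B satisfies the same equation without the last
   term. For |z| < 1/(4m), B(|z|) converges to (1 - sqrt(1 - 4m|z|)) / (2m|z|) and dominates
   A termwise, so |2 m z A(z)| <= 1, which selects the root with the minus sign. Finally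
   c_n = B_(n+1) - A_(n+1). *)

Local Open Scope nat_scope.

Definition btree_eq_dec : forall s t : btree, {s = t} + {s <> t}.
Proof.
  fix IH 1. decide equality; [decide equality | decide equality | apply Nat.eq_dec].
Defined.

Definition osize (o : option btree) : nat :=
  match o with None => 0 | Some t => nnodes t end.

Definition on_some (P : btree -> Prop) (o : option btree) : Prop :=
  match o with None => True | Some t => P t end.

Lemma nnodes_Node a l r : nnodes (Node a l r) = S (osize l + osize r).
Proof. now destruct l, r. Qed.

Lemma nnodes_pos t : 1 <= nnodes t.
Proof. destruct t; rewrite nnodes_Node; lia. Qed.

Lemma osize_eq_0 o : osize o = 0 <-> o = None.
Proof.
  destruct o as [t|]; simpl; [|tauto].
  pose proof (nnodes_pos t); split; [lia | discriminate].
Qed.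

Lemma labeled_Node m a l r :
  labeled m (Node a l r) <->
  1 <= a <= m /\ on_some (labeled m) l /\ on_some (labeled m) r.
Proof. now destruct l, r. Qed.

Lemma contains_nnodes_le t s : contains t s -> nnodes s <= nnodes t.
Proof. induction 1; rewrite ?nnodes_Node; simpl in *; lia. Qed.

Lemma contains_Node a l r s :
  contains (Node a l r) s <->
  Node a l r = s \/ (exists l', l = Some l' /\ contains l' s)
                 \/ (exists r', r = Some r' /\ contains r' s).
Proof.
  split.
  - intros H; inversion H; subst; eauto.
  - intros [<- | [[l' [-> H]] | [r' [-> H]]]]; now constructor.
Qed.

Definition hereditary (g : btree -> bool) (t : btree) : Prop :=
  forall s, contains t s -> g s = true.

Lemma hereditary_Node g a l r :
  hereditary g (Node a l r) <->
  g (Node a l r) = true /\ on_some (hereditary g) l /\ on_some (hereditary g) r.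
Proof.
  unfold hereditary; setoid_rewrite contains_Node.
  split.
  - intros H; destruct l, r; simpl; repeat split; intros; apply H; eauto 6.
  - intros (Hg & Hl & Hr) s [<- | [(l' & -> & Hs) | (r' & -> & Hs)]]; auto.
Qed.

Definition avoid (u t : btree) : bool := if btree_eq_dec u t then false else true.

Lemma hereditary_avoid u t : hereditary (avoid u) t <-> ~ contains t u.
Proof.
  unfold hereditary, avoid; split.
  - intros H Hu; specialize (H u Hu); now destruct btree_eq_dec.
  - intros H s Hs; destruct btree_eq_dec; [subst; contradiction | reflexivity].
Qed.

Definition joins (m : nat) (E : nat -> list (option btree)) (k : nat) : list btree :=
  flat_map (fun a =>
    flat_map (fun i => flat_map (fun l => map (Node a l) (E (k - i))) (E i))
      (seq 0 (S k)))
    (seq 1 m).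

Lemma In_joins m E (Q : btree -> Prop) k :
  (forall j o, j <= k -> In o (E j) <-> osize o = j /\ on_some Q o) ->
  forall t, In t (joins m E k) <->
    exists a l r, t = Node a l r /\ 1 <= a <= m /\ osize l + osize r = k
                  /\ on_some Q l /\ on_some Q r.
Proof.
  intros HE t; unfold joins; repeat setoid_rewrite in_flat_map; setoid_rewrite in_seq.
  split.
  - intros (a & Ha & i & Hi & l & Hl & Hr).
    apply in_map_iff in Hr as (r & <- & Hr).
    apply HE in Hl; [|lia]. apply HE in Hr; [|lia].
    exists a, l, r; intuition lia.
  - intros (a & l & r & -> & Ha & Hk & Hl & Hr).
    exists a; split; [lia|]. exists (osize l); split; [lia|]. exists l; split.
    + apply HE; [lia | auto].
    + apply in_map; apply HE; [lia | split; [lia | auto]].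
Qed.

Lemma NoDup_flat_map_retract {A B} (f : A -> list B) (pr : B -> A) (l : list A) :
  NoDup l -> (forall a, In a l -> NoDup (f a)) ->
  (forall a b, In a l -> In b (f a) -> pr b = a) -> NoDup (flat_map f l).
Proof.
  induction 1 as [|a l Ha Hl IH]; intros Hf Hpr; simpl; [constructor|].
  apply NoDup_app.
  - apply Hf; now left.
  - apply IH; intros; [apply Hf | apply Hpr]; simpl; auto.
  - intros b Hb Hb'; apply in_flat_map in Hb' as (a' & Ha' & Hb').
    assert (pr b = a) by (apply Hpr; simpl; auto).
    assert (pr b = a') by (apply Hpr; simpl; auto).
    congruence.
Qed.

Definition root_label (t : btree) : nat := match t with Node a _ _ => a end.
Definition left_child (t : btree) : option btree := match t with Node _ l _ => l end.

Lemma NoDup_joins m E k :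
  (forall j, j <= k -> NoDup (E j)) ->
  (forall j o, j <= k -> In o (E j) -> osize o = j) ->
  NoDup (joins m E k).
Proof.
  intros HN HE; unfold joins.
  apply NoDup_flat_map_retract with (pr := root_label); [apply seq_NoDup | |].
  2: { intros a t _ Ht.
       apply in_flat_map in Ht as (i & _ & Ht); apply in_flat_map in Ht as (l & _ & Ht).
       now apply in_map_iff in Ht as (r & <- & _). }
  intros a _.
  apply NoDup_flat_map_retract with (pr := fun t => osize (left_child t));
    [apply seq_NoDup | |].
  2: { intros i t Hi Ht; apply in_seq in Hi.
       apply in_flat_map in Ht as (l & Hl & Ht); apply in_map_iff in Ht as (r & <- & _).
       apply (HE i); [lia | exact Hl]. }
  intros i Hi; apply in_seq in Hi.
  apply NoDup_flat_map_retract with (pr := left_child); [apply HN; lia | |].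
  2: { intros l t _ Ht; now apply in_map_iff in Ht as (r & <- & _). }
  intros l _; apply NoDup_map_NoDup_ForallPairs; [|apply HN; lia].
  intros r r' _ _ E'; congruence.
Qed.

Lemma length_joins m E k :
  length (joins m E k) =
  m * list_sum (map (fun i => length (E i) * length (E (k - i))) (seq 0 (S k))).
Proof.
  unfold joins; erewrite flat_map_constant_length; [now rewrite length_seq |].
  intros a _; rewrite length_flat_map; f_equal; apply map_ext; intros i.
  rewrite (flat_map_constant_length (c := length (E (k - i)))); [reflexivity|].
  intros l _; apply length_map.
Qed.

(* [oenum m g f j] lists the trees with [j] nodes (as [Some t], with [None] for
   [j = 0]) all of whose subtrees satisfy [g]; [f] is fuel, enough when [j <= f]. *)
Fixpoint oenum (m : nat) (g : btree -> bool) (f j : nat) : list (option btree) :=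
  match j, f with
  | 0, _ => [None]
  | S _, 0 => []
  | S k, S f' => map Some (filter g (joins m (oenum m g f') k))
  end.

Lemma In_oenum m g f : forall j o, j <= f ->
  In o (oenum m g f j) <->
  osize o = j /\ on_some (fun t => labeled m t /\ hereditary g t) o.
Proof.
  induction f as [|f IH]; intros [|k] o Hj; try lia.
  1, 2: simpl; rewrite osize_eq_0; split; [intros [<- | []] | intros [-> _]]; simpl; auto.
  simpl oenum; rewrite in_map_iff; setoid_rewrite filter_In.
  setoid_rewrite (In_joins m _ _ k (fun j o Hjk => IH j o ltac:(lia))).
  split.
  - intros (t & <- & (a & l & r & -> & Ha & Hk & Hl & Hr) & Hg); cbn [osize on_some].
    rewrite nnodes_Node, labeled_Node, hereditary_Node.
    destruct l, r; simpl in *; intuition lia.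
  - destruct o as [t|]; cbn [osize on_some]; [|lia].
    intros [Hn [Hlab Hher]]; exists t; split; [reflexivity|].
    destruct t as [a l r].
    rewrite nnodes_Node in Hn; rewrite labeled_Node in Hlab.
    rewrite hereditary_Node in Hher.
    split; [exists a, l, r | tauto].
    destruct l, r; simpl in *; intuition lia.
Qed.

Lemma NoDup_oenum m g f : forall j, j <= f -> NoDup (oenum m g f j).
Proof.
  induction f as [|f IH]; intros [|k] Hj; try lia; simpl;
    try (constructor; [intros [] | constructor]).
  apply NoDup_map_NoDup_ForallPairs; [intros x y _ _; congruence|].
  apply NoDup_filter, NoDup_joins; [intros; apply IH; lia|].
  intros j o Hjk Ho; apply In_oenum in Ho; [tauto | lia].
Qed.

Definition count_hereditary (m : nat) (g : btree -> bool) (k : nat) : nat :=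
  length (oenum m g k k).

Lemma length_oenum m g f j : j <= f -> length (oenum m g f j) = count_hereditary m g j.
Proof.
  intros Hj; apply Permutation_length, NoDup_Permutation; try apply NoDup_oenum; try lia.
  intros o; rewrite !In_oenum by lia; tauto.
Qed.

Definition nat_conv (a : nat -> nat) (k : nat) : nat :=
  list_sum (map (fun i => a i * a (k - i)) (seq 0 (S k))).

Lemma length_joins_oenum m g k :
  length (joins m (oenum m g k) k) = m * nat_conv (count_hereditary m g) k.
Proof.
  rewrite length_joins; unfold nat_conv; do 2 f_equal.
  apply map_ext_in; intros i Hi; apply in_seq in Hi.
  rewrite !length_oenum by lia; reflexivity.
Qed.

Lemma count_hereditary_S m g k :
  count_hereditary m g (S k) = length (filter g (joins m (oenum m g k) k)).
Proof. apply length_map. Qed.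

Definition count_all (m k : nat) : nat := count_hereditary m (fun _ => true) k.

Definition count_avoiding (m : nat) (u : btree) (k : nat) : nat :=
  count_hereditary m (avoid u) k.

Lemma count_all_S m k : count_all m (S k) = m * nat_conv (count_all m) k.
Proof.
  unfold count_all; now rewrite count_hereditary_S, List.filter_true, length_joins_oenum.
Qed.

Lemma length_remove_NoDup {A} (eq_dec : forall x y : A, {x = y} + {x <> y}) x l :
  NoDup l -> In x l -> S (length (remove eq_dec x l)) = length l.
Proof.
  intros Hl Hx; apply in_split in Hx as (l1 & l2 & ->).
  apply NoDup_remove_2 in Hl; rewrite in_app_iff in Hl.
  rewrite remove_app; simpl; destruct eq_dec; [|congruence].
  rewrite !notin_remove by tauto; rewrite !length_app; simpl; lia.
Qed.

Lemma In_joins_avoid m u k :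
  labeled m u -> In u (joins m (oenum m (avoid u) k) k) <-> k = edges u.
Proof.
  intros Hu; rewrite (In_joins m _ (fun t => labeled m t /\ hereditary (avoid u) t) k)
    by (intros; apply In_oenum; lia).
  unfold edges; destruct u as [a l r]; rewrite nnodes_Node; rewrite labeled_Node in Hu.
  split.
  - intros (a' & l' & r' & E & _ & Hk & _); injection E as <- <- <-; lia.
  - intros Hk; exists a, l, r; repeat split; try tauto; try lia.
    all: match goal with |- on_some _ ?o => destruct o as [s|]; simpl in *; [|tauto] end.
    all: split; [tauto|]; apply hereditary_avoid; intros Hs.
    all: apply contains_nnodes_le in Hs; rewrite nnodes_Node in Hs; simpl in Hs; lia.
Qed.

Lemma count_avoiding_S m u k :
  labeled m u ->
  count_avoiding m u (S k) + (if k =? edges u then 1 else 0) =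
  m * nat_conv (count_avoiding m u) k.
Proof.
  intros Hu; unfold count_avoiding; rewrite count_hereditary_S, <- length_joins_oenum.
  change (filter (avoid u) ?l) with (remove' btree_eq_dec u l); rewrite remove_alt.
  assert (HN : NoDup (joins m (oenum m (avoid u) k) k)).
  { apply NoDup_joins; [intros; apply NoDup_oenum; lia|].
    intros j o Hj Ho; apply In_oenum in Ho; [tauto | lia]. }
  destruct (Nat.eqb_spec k (edges u)) as [Hk | Hk].
  - rewrite <- (length_remove_NoDup btree_eq_dec u _ HN) by now apply In_joins_avoid. lia.
  - rewrite notin_remove by now rewrite In_joins_avoid. lia.
Qed.

Lemma hereditary_true t : hereditary (fun _ => true) t.
Proof. now intros s _. Qed.

Lemma count_avoiding_le_all m u k : count_avoiding m u k <= count_all m k.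
Proof.
  apply NoDup_incl_length; [apply NoDup_oenum; lia|].
  intros o; rewrite !In_oenum by lia; intros [Hn Ho]; split; [exact Hn|].
  destruct o; simpl in *; [|exact I].
  split; [tauto | apply hereditary_true].
Qed.

Lemma count_containing m u n c :
  is_count (fun t => labeled m t /\ edges t = n /\ contains t u) c ->
  c + count_avoiding m u (S n) = count_all m (S n).
Proof.
  intros (s & Hs & Hin & <-).
  rewrite <- (length_map Some s); unfold count_avoiding, count_all, count_hereditary.
  rewrite <- length_app; apply Permutation_length, NoDup_Permutation.
  - apply NoDup_app; [| apply NoDup_oenum; lia |].
    + apply NoDup_map_NoDup_ForallPairs; [intros x y _ _; congruence | exact Hs].
    + intros o Ho Ho'; apply in_map_iff in Ho as (t & <- & Ht); apply Hin in Ht.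
      apply In_oenum in Ho' as [_ [_ Ht']]; [|lia]. now apply hereditary_avoid in Ht'.
  - apply NoDup_oenum; lia.
  - intros [t|]; rewrite in_app_iff, in_map_iff, !In_oenum by lia; cbn [osize on_some].
    + rewrite hereditary_avoid.
      assert (Hn : edges t = n <-> nnodes t = S n)
        by (pose proof (nnodes_pos t); unfold edges; lia).
      split.
      * intros [(t' & [= <-] & Ht) | (? & ? & _)]; [apply Hin in Ht|];
          repeat split; try tauto; apply hereditary_true.
      * intros (? & ? & _); destruct (classic (contains t u)); [left | right; tauto].
        exists t; split; [reflexivity|]; apply Hin; tauto.
    + split; [intros [(t' & ? & _) | [? _]] | intros [? _]]; discriminate.
Qed.

Local Open Scope R_scope.

Definition conv (a : nat -> R) (k : nat) : R := sum_f_R0 (fun i => a i * a (k - i)%nat) k.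

Lemma INR_list_sum_seq (h : nat -> nat) k :
  INR (list_sum (map h (seq 0 (S k)))) = sum_f_R0 (fun i => INR (h i)) k.
Proof.
  induction k as [|k IH]; [simpl; now rewrite Nat.add_0_r|].
  rewrite seq_S, map_app, list_sum_app, plus_INR, IH; simpl; now rewrite Nat.add_0_r.
Qed.

Lemma INR_nat_conv a k : INR (nat_conv a k) = conv (fun i => INR (a i)) k.
Proof.
  unfold nat_conv, conv; rewrite INR_list_sum_seq.
  apply sum_eq; intros; apply mult_INR.
Qed.

Lemma conv_mult_pow a z k : conv a k * z ^ k = conv (fun i => a i * z ^ i) k.
Proof.
  unfold conv; rewrite Rmult_comm, scal_sum; apply sum_eq; intros i Hi.
  assert (E : z ^ k = z ^ i * z ^ (k - i)) by (rewrite <- pow_add; f_equal; lia).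
  rewrite E; ring.
Qed.

Lemma sum_conv_le_sqr (a : nat -> R) N :
  (forall n, 0 <= a n) -> sum_f_R0 (conv a) N <= (sum_f_R0 a N) ^ 2.
Proof.
  intros Ha; unfold conv; destruct N as [|N]; [simpl; specialize (Ha 0%nat); nra|].
  rewrite <- Rsqr_pow2; unfold Rsqr; rewrite cauchy_finite by lia.
  assert (0 <= sum_f_R0 (fun k => sum_f_R0 (fun l => a (S (l + k)) * a (S N - l)%nat)
                                     (Init.Nat.pred (S N - k))) (Init.Nat.pred (S N))).
  { apply cond_pos_sum; intros; apply cond_pos_sum; intros; apply Rmult_le_pos; apply Ha. }
  lra.
Qed.

Lemma is_series_of_partial_sums (a : nat -> R) (l : R) :
  is_lim_seq (sum_f_R0 a) l -> is_series a l.
Proof. intros H; apply is_series_Reals, is_lim_seq_Reals, H. Qed.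

Lemma sum_f_R0_single (p : nat) c N :
  sum_f_R0 (fun k => if (k =? p)%nat then c else 0) N = if (p <=? N)%nat then c else 0.
Proof.
  induction N as [|N IH]; cbn [sum_f_R0].
  - now destruct p.
  - rewrite IH; destruct (Nat.leb_spec p N), (Nat.eqb_spec (S N) p), (Nat.leb_spec p (S N));
      try lia; ring.
Qed.

Lemma is_series_single (p : nat) c : is_series (fun k => if (k =? p)%nat then c else 0) c.
Proof.
  apply is_series_of_partial_sums, is_lim_seq_ext_loc with (u := fun _ => c);
    [|apply is_lim_seq_const].
  exists p; intros N HN; rewrite sum_f_R0_single.
  destruct (Nat.leb_spec p N); [reflexivity | lia].
Qed.

Lemma is_series_zero : is_series (fun _ : nat => 0) 0.
Proof.
  apply is_series_of_partial_sums, is_lim_seq_ext with (u := fun _ => 0);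
    [|apply is_lim_seq_const].
  intros N; rewrite sum_cte; ring.
Qed.

Lemma is_series_shift_div (a : nat -> R) (L z : R) :
  z <> 0 -> a 0%nat = 0 -> is_series (fun k => a k * z ^ k) L ->
  is_series (fun n => a (S n) * z ^ n) (L / z).
Proof.
  intros Hz Ha0 HL.
  assert (Htail : is_series (fun n => a (S n) * z ^ S n) L).
  { apply (is_series_incr_1 (fun k => a k * z ^ k)).
    replace (plus L _) with L; [exact HL|]. rewrite Ha0; unfold plus; simpl; ring. }
  apply (is_series_scal_l (/ z)) in Htail.
  eapply is_series_ext; [|unfold Rdiv; rewrite Rmult_comm; exact Htail].
  intros n; unfold scal; simpl; unfold mult; simpl; field; exact Hz.
Qed.

Lemma quadratic_small_root b e X :
  b <> 0 -> X = 1 + b * X ^ 2 - e -> Rabs (2 * b * X) <= 1 ->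
  X = (1 - sqrt (1 - 4 * b + 4 * b * e)) / (2 * b).
Proof.
  intros Hb HX Hsmall.
  assert (Hsq : 1 - 4 * b + 4 * b * e = (1 - 2 * b * X) ^ 2)
    by (apply Rminus_diag_uniq; replace e with (1 + b * X ^ 2 - X) by lra; ring).
  apply Rabs_le_between in Hsmall.
  rewrite Hsq, sqrt_pow2 by lra; field; exact Hb.
Qed.

Lemma recurrence_series_equation (m : R) (x d : nat -> R) (z X D : R) :
  x 0%nat = 1 -> (forall k, x (S k) = m * conv x k - d k) ->
  is_series (fun k => x k * z ^ k) X -> ex_series (fun k => Rabs (x k * z ^ k)) ->
  is_series (fun k => d k * z ^ k) D ->
  X = 1 + m * z * X ^ 2 - z * D.
Proof.
  intros Hx0 HxS HX Habs HD.
  assert (Htail : is_series (fun k => x (S k) * z ^ S k) (X - 1)).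
  { apply (is_series_incr_1 (fun k => x k * z ^ k)).
    replace (plus (X - 1) _) with X; [exact HX|].
    rewrite Hx0; unfold plus; simpl; ring. }
  assert (Hsquare := is_series_mult _ _ _ _ HX HX Habs Habs).
  assert (Hrhs := is_series_minus _ _ _ _ (is_series_scal_l (m * z) _ _ Hsquare)
                    (is_series_scal_l z _ _ HD)).
  apply (is_series_ext _ (fun k => x (S k) * z ^ S k)) in Hrhs.
  2: { intros k; fold (conv (fun i => x i * z ^ i) k); rewrite <- conv_mult_pow, HxS.
       unfold scal, plus, opp; simpl; unfold mult; simpl; ring. }
  apply is_series_unique in Htail, Hrhs; rewrite Htail in Hrhs.
  unfold scal, plus, opp in Hrhs; simpl in Hrhs; unfold mult in Hrhs; simpl in Hrhs.
  nra.
Qed.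

Section Majorant.

Variable m : R.
Hypothesis m_pos : 0 < m.

Definition catalan_gf (w : R) : R := (1 - sqrt (1 - 4 * m * w)) / (2 * m * w).

Lemma catalan_gf_scaled w : 0 < w -> 2 * m * w * catalan_gf w = 1 - sqrt (1 - 4 * m * w).
Proof. intros Hw; unfold catalan_gf; field; nra. Qed.

Lemma catalan_gf_fixpoint w :
  0 < w -> 4 * m * w <= 1 -> catalan_gf w = 1 + m * w * catalan_gf w ^ 2.
Proof.
  intros Hw Hmw; apply Rmult_eq_reg_l with (4 * m * w); [|nra].
  assert (Hs := pow2_sqrt (1 - 4 * m * w) ltac:(lra)).
  assert (Hr := catalan_gf_scaled w Hw).
  set (r := catalan_gf w) in *; set (s := sqrt (1 - 4 * m * w)) in *.
  replace (4 * m * w * (1 + m * w * r ^ 2)) with (4 * m * w + (2 * m * w * r) ^ 2) by ring.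
  replace (4 * m * w * r) with (2 * (2 * m * w * r)) by ring.
  rewrite Hr; nra.
Qed.

Variable y : nat -> R.
Hypotheses (y_0 : y 0%nat = 1) (y_S : forall k, y (S k) = m * conv y k)
  (y_nonneg : forall k, 0 <= y k).

Lemma majorant_terms_nonneg w : 0 <= w -> forall k, 0 <= y k * w ^ k.
Proof. intros Hw k; apply Rmult_le_pos; [apply y_nonneg | now apply pow_le]. Qed.

(* With S_N the N-th partial sum and r = catalan_gf w:
   S_(N+1) = 1 + m w (N-th partial sum of the self-convolution) <= 1 + m w S_N^2
   <= 1 + m w r^2 = r. *)
Lemma partial_sums_le_catalan_gf w :
  0 < w -> 4 * m * w <= 1 -> forall N, sum_f_R0 (fun k => y k * w ^ k) N <= catalan_gf w.
Proof.
  intros Hw Hmw.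
  assert (Hfix := catalan_gf_fixpoint w Hw Hmw); set (r := catalan_gf w) in *.
  assert (Hr : 1 <= r).
  { rewrite Hfix; assert (0 <= m * w * r ^ 2) by (apply Rmult_le_pos; nra); lra. }
  assert (Hterm := majorant_terms_nonneg w ltac:(lra)).
  induction N as [|N IH]; [simpl; rewrite y_0; lra|].
  rewrite decomp_sum by lia; simpl pred; rewrite y_0, pow_O, Rmult_1_r.
  assert (Hshift : sum_f_R0 (fun k => y (S k) * w ^ S k) N
                   = m * w * sum_f_R0 (conv (fun i => y i * w ^ i)) N).
  { rewrite scal_sum, Rmult_comm; apply sum_eq; intros k _.
    rewrite y_S, <- conv_mult_pow; simpl; ring. }
  rewrite Hshift.
  assert (Hsq := sum_conv_le_sqr _ N Hterm).
  assert (0 <= sum_f_R0 (fun i => y i * w ^ i) N) by (apply cond_pos_sum; exact Hterm).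
  assert (sum_f_R0 (fun i => y i * w ^ i) N ^ 2 <= r ^ 2) by (apply pow_incr; lra).
  assert (m * w * sum_f_R0 (conv (fun i => y i * w ^ i)) N <= m * w * r ^ 2)
    by (apply Rmult_le_compat_l; nra).
  lra.
Qed.

Lemma is_series_majorant w :
  0 < w -> 4 * m * w <= 1 ->
  exists Y, is_series (fun k => y k * w ^ k) Y /\ Y <= catalan_gf w.
Proof.
  intros Hw Hmw.
  assert (Hbound := partial_sums_le_catalan_gf w Hw Hmw).
  assert (Hlim : ex_finite_lim_seq (sum_f_R0 (fun k => y k * w ^ k))).
  { apply ex_finite_lim_seq_incr with (M := catalan_gf w); [|exact Hbound].
    intros n; cbn [sum_f_R0].
    assert (Hterm := majorant_terms_nonneg w ltac:(lra) (S n)); lra. }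
  destruct Hlim as [Y HY]; exists Y; split; [now apply is_series_of_partial_sums|].
  exact (is_lim_seq_le _ _ _ _ Hbound HY (is_lim_seq_const _)).
Qed.

Lemma dominated_series_bound (x : nat -> R) z :
  (forall k, Rabs (x k) <= y k) -> z <> 0 -> 4 * m * Rabs z <= 1 ->
  ex_series (fun k => Rabs (x k * z ^ k))
  /\ Rabs (2 * m * z * Series (fun k => x k * z ^ k)) <= 1.
Proof.
  intros Hxy Hz Hmz.
  assert (Hw : 0 < Rabs z) by now apply Rabs_pos_lt.
  destruct (is_series_majorant _ Hw Hmz) as (Y & HY & HYr).
  assert (Hdom : forall k, 0 <= Rabs (x k * z ^ k) <= y k * Rabs z ^ k).
  { intros k; split; [apply Rabs_pos|].
    rewrite Rabs_mult, <- RPow_abs.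
    apply Rmult_le_compat_r; [apply pow_le, Rabs_pos | apply Hxy]. }
  assert (Habs : ex_series (fun k => Rabs (x k * z ^ k))).
  { apply (ex_series_le (V := R_CompleteNormedModule))
      with (b := fun k => y k * Rabs z ^ k); [|now exists Y].
    intros k; unfold norm; simpl; rewrite Rabs_Rabsolu; apply Hdom. }
  split; [exact Habs|].
  assert (Hle : Rabs (Series (fun k => x k * z ^ k)) <= catalan_gf (Rabs z)).
  { eapply Rle_trans; [apply Series_Rabs, Habs|].
    eapply Rle_trans; [apply Series_le; [exact Hdom | now exists Y]|].
    now rewrite (is_series_unique _ _ HY). }
  assert (Hr := catalan_gf_scaled _ Hw); assert (Hs := sqrt_pos (1 - 4 * m * Rabs z)).
  rewrite !Rabs_mult, (Rabs_right 2), (Rabs_right m) by lra.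
  apply Rle_trans with (2 * m * Rabs z * catalan_gf (Rabs z)); [|lra].
  apply Rmult_le_compat_l; [nra | exact Hle].
Qed.

Lemma is_series_dominated_recurrence (x d : nat -> R) (z D : R) :
  z <> 0 -> Rabs z < / (4 * m) -> (forall k, Rabs (x k) <= y k) ->
  x 0%nat = 1 -> (forall k, x (S k) = m * conv x k - d k) ->
  is_series (fun k => d k * z ^ k) D ->
  is_series (fun k => x k * z ^ k)
    ((1 - sqrt (1 - 4 * m * z + 4 * m * z ^ 2 * D)) / (2 * m * z)).
Proof.
  intros Hz Hzm Hxy Hx0 HxS HD.
  assert (Hmz : 4 * m * Rabs z <= 1).
  { apply Rmult_lt_compat_l with (r := 4 * m) in Hzm; [|lra].
    rewrite Rinv_r in Hzm by lra; lra. }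
  destruct (dominated_series_bound x z Hxy Hz Hmz) as [Habs Hsmall].
  assert (HX : is_series (fun k => x k * z ^ k) (Series (fun k => x k * z ^ k)))
    by (apply Series_correct, ex_series_Rabs, Habs).
  set (X := Series _) in *.
  assert (Heq := recurrence_series_equation m x d z X D Hx0 HxS HX Habs HD).
  replace (1 - 4 * m * z + 4 * m * z ^ 2 * D) with (1 - 4 * (m * z) + 4 * (m * z) * (z * D))
    by ring.
  replace (2 * m * z) with (2 * (m * z)) by ring.
  rewrite <- (quadratic_small_root (m * z) (z * D) X);
    [exact HX | | exact Heq | now rewrite <- Rmult_assoc].
  apply Rmult_integral_contrapositive; split; lra.
Qed.

End Majorant.

Lemma INR_count_all_S m k :
  INR (count_all m (S k)) = INR m * conv (fun i => INR (count_all m i)) k.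
Proof. now rewrite count_all_S, mult_INR, INR_nat_conv. Qed.

Lemma INR_count_avoiding_S m u k :
  labeled m u ->
  INR (count_avoiding m u (S k)) =
  INR m * conv (fun i => INR (count_avoiding m u i)) k
  - (if (k =? edges u)%nat then 1 else 0).
Proof.
  intros Hu; rewrite <- INR_nat_conv, <- mult_INR, <- (count_avoiding_S m u k Hu), plus_INR.
  destruct (k =? edges u)%nat; simpl; ring.
Qed.

Lemma is_series_count_all m z :
  (1 <= m)%nat -> z <> 0 -> Rabs z < / (4 * INR m) ->
  is_series (fun k => INR (count_all m k) * z ^ k)
    ((1 - sqrt (1 - 4 * INR m * z)) / (2 * INR m * z)).
Proof.
  intros Hm Hz Hzm.
  assert (Hzero : is_series (fun k => 0 * z ^ k) 0).
  { refine (is_series_ext _ _ _ _ is_series_zero); intros; now rewrite Rmult_0_l. }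
  replace (1 - 4 * INR m * z) with (1 - 4 * INR m * z + 4 * INR m * z ^ 2 * 0) by ring.
  apply (is_series_dominated_recurrence _ (lt_0_INR m Hm) _ eq_refl (INR_count_all_S m)
           (fun k => pos_INR _) _ (fun _ => 0)); auto.
  - intros k; rewrite Rabs_pos_eq by apply pos_INR; apply Rle_refl.
  - intros k; rewrite INR_count_all_S; ring.
Qed.

Lemma is_series_count_avoiding m u z :
  (1 <= m)%nat -> labeled m u -> z <> 0 -> Rabs z < / (4 * INR m) ->
  is_series (fun k => INR (count_avoiding m u k) * z ^ k)
    ((1 - sqrt (1 - 4 * INR m * z + 4 * INR m * z ^ (edges u + 2))) / (2 * INR m * z)).
Proof.
  intros Hm Hu Hz Hzm.
  assert (Hsingle : is_series (fun k => (if (k =? edges u)%nat then 1 else 0) * z ^ k)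
                      (z ^ edges u)).
  { refine (is_series_ext _ _ _ _ (is_series_single (edges u) (z ^ edges u))).
    intros k; destruct (Nat.eqb_spec k (edges u)) as [->|];
      [now rewrite Rmult_1_l | now rewrite Rmult_0_l]. }
  replace (4 * INR m * z ^ (edges u + 2)) with (4 * INR m * z ^ 2 * z ^ edges u)
    by (rewrite pow_add; ring).
  apply (is_series_dominated_recurrence _ (lt_0_INR m Hm) _ eq_refl (INR_count_all_S m)
           (fun k => pos_INR _) _ (fun k => if (k =? edges u)%nat then 1 else 0)); auto.
  - intros k; rewrite Rabs_pos_eq by apply pos_INR; apply le_INR, count_avoiding_le_all.
  - intros k; now apply INR_count_avoiding_S.
Qed.

Theorem lemma8 (m : nat) (u : btree) (c : nat -> nat) :
  (1 <= m)%nat ->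
  labeled m u ->
  (forall n : nat,
      is_count (fun t => labeled m t /\ edges t = n /\ contains t u) (c n)) ->
  forall z : R, z <> 0 -> Rabs z < / (4 * INR m) ->
  is_series (fun n => INR (c n) * z ^ n)
    ((sqrt (1 - 4 * INR m * z + 4 * INR m * z ^ (edges u + 2))
      - sqrt (1 - 4 * INR m * z)) / (2 * INR m * z ^ 2)).
Proof.
  intros Hm Hu Hc z Hz Hzm.
  assert (HmR : 0 < INR m) by (apply lt_0_INR; lia).
  set (y := fun k => INR (count_all m k)); set (x := fun k => INR (count_avoiding m u k)).
  apply (is_series_ext (fun n => (y (S n) - x (S n)) * z ^ n)).
  { intros n; f_equal; unfold x, y.
    rewrite <- (count_containing m u n (c n) (Hc n)), plus_INR; ring. }
  match goal with |- is_series _ ?L => replace L with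
    (((1 - sqrt (1 - 4 * INR m * z)) / (2 * INR m * z)
      - (1 - sqrt (1 - 4 * INR m * z + 4 * INR m * z ^ (edges u + 2)))
        / (2 * INR m * z)) / z)
    by (field; lra) end.
  apply (is_series_shift_div (fun k => y k - x k)); [exact Hz | unfold x, y; simpl; ring |].
  refine (is_series_ext _ _ _ _ (is_series_minus _ _ _ _
            (is_series_count_all m z Hm Hz Hzm)
            (is_series_count_avoiding m u z Hm Hu Hz Hzm))).
  intros k; now rewrite Rmult_minus_distr_r.
Qed.
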